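(* Let $\mathcal{T}$ be a trie and let $p$ and $q$ be palindromes occurring in $\mathcal{T}$ (i.e. $p,q\in\mathsf{Substr}(\mathcal{T})$) such that $p$ is a proper prefix of $q$. If the locus of $p$ in $\mathsf{STree}(\mathcal{T})$ is an implicit node on an edge $(u,v)$ (with $v$ the child endpoint) and the character following it on that edge is $c$, then the locus of $q$ is an implicit node on some edge in the subtree of $\mathsf{STree}(\mathcal{T})$ rooted at $v$, and the character following it on its edge is also $c$.
   Context: A trie $\mathcal{T}$ is a rooted tree in which each edge is labeled by a single character and the out-going edges of each node have mutually distinct labels. Path labels are read leaf-to-root: for $\mathbf{u}$ a descendant of $\mathbf{v}$, $\mathsf{str}(\mathbf{u},\mathbf{v})$ is the string of edge labels on the path from $\mathbf{u}$ up to $\mathbf{v}$, and $\mathsf{Substr}(\mathcal{T})$ is the set of all such strings. By convention the root $\mathbf{r}$ of $\mathcal{T}$ has a single child, reached by an edge labeled by a special character $\$$ occurring nowhere else in $\mathcal{T}$. For each node $\mathbf{v}$ let $\mathsf{suf}(\mathbf{v})=\mathsf{str}(\mathbf{v},\mathbf{r})$. The suffix tree $\mathsf{STree}(\mathcal{T})$ is the compacted trie (edges labeled by non-empty strings, out-going edge labels of each node beginning with distinct characters, every internal node other than the root having at least two children) whose leaves are in one-to-one correspondence with the non-root nodes $\mathbf{v}$ of $\mathcal{T}$, the leaf for $\mathbf{v}$ spelling $\mathsf{suf}(\mathbf{v})$ from the root. The locus of a string $w\in\mathsf{Substr}(\mathcal{T})$ is the end point of the path spelling $w$ from the root of $\mathsf{STree}(\mathcal{T})$;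 it is an explicit node if it is a node of $\mathsf{STree}(\mathcal{T})$ and an implicit node if it lies strictly inside an edge. A palindrome is a string equal to its reversal. *)

From mathcomp Require Import all_boot.
Set Implicit Arguments. Unset Strict Implicit. Unset Printing Implicit Defensive.

(* A trie is given by a finite node type [T], a root [r], a parent map [par]
   ([par v] is the parent of [v <> r]) and [lab v] = label of the edge
   from [v] up to [par v] (meaningless for [v = r]).  [dol] is the special
   character $. *)
Section Trie.
Variables (A : eqType) (T : finType) (r : T) (par : T -> T) (lab : T -> A)
          (dol : A).

Definition is_trie : Prop :=
  [/\ par r = r,
      (forall v, exists k, iter k par v = r),
      (forall u v, u != r -> v != r -> par u = par v -> lab u = lab v -> u = v),
      ((exists u, u != r /\ par u = r) /\
       (forall u v, u != r -> v != r -> par u = r -> par v = r -> u = v))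
    &
      (forall u, u != r -> (lab u == dol) = (par u == r))].

(* [is_str w u v]: [u] is a descendant of [v] and [w = str(u,v)], the labels
   read on the path from [u] up to [v]. *)
Definition is_str (w : seq A) (u v : T) : Prop :=
  iter (size w) par u = v /\
  (forall i, i < size w -> iter i par u != r) /\
  w = [seq lab (iter i par u) | i <- iota 0 (size w)].

Definition in_substr (w : seq A) : Prop := exists u v, is_str w u v.

(* w = suf(v) for some non-root node v (leaves of STree) *)
Definition is_suf (w : seq A) : Prop := exists v, v != r /\ is_str w v r.

(* w spells a path (explicit or implicit node) from the root of STree *)
Definition in_stree (w : seq A) : Prop :=
  exists s, is_suf s /\ prefix w s.

(* The locus of w is an explicit node of STree: the root, a leaf, or a
   branching internal node. *)
Definition explicit (w : seq A) : Prop :=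
  in_stree w /\
  [\/ w = [::], is_suf w |
      exists a b, [/\ a != b, in_stree (rcons w a) & in_stree (rcons w b)]].

(* The locus of w is an implicit node and the character following it on
   its edge is c. *)
Definition implicit_next (w : seq A) (c : A) : Prop :=
  [/\ in_stree w, ~ explicit w & in_stree (rcons w c)].

(* [sv] is (the string of) the child endpoint v of the edge (u,v) of STree
   on which the locus of w lies. *)
Definition edge_child (w sv : seq A) : Prop :=
  [/\ explicit sv, prefix w sv, w != sv &
      forall x, prefix w x -> prefix x sv -> x != sv -> ~ explicit x].

Definition palindrome (w : seq A) : Prop := rev w = w.

End Trie.

From mathcomp Require Import all_boot.
Set Implicit Arguments. Unset Strict Implicit. Unset Printing Implicit Defensive.

(* Since p and q are palindromes and p is a prefix of q, p is also a suffix
   of q = x ++ p.  Substrings of the suffix tree are closed under suffixes, so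
   every continuation of q is a continuation of p; as the locus of p is
   implicit with c as its only continuation, the same holds for q.  No
   explicit node lies strictly between p and v, so every extension of p in the
   suffix tree is comparable with str(v).  And str(v) cannot extend x ++ p with
   x nonempty: str(v) = x ++ p ++ w is a leaf or a branching node, hence so is
   its shorter suffix p ++ w, an explicit node strictly between p and v. *)

Lemma palindrome_prefix_suffix (A : eqType) (p q : seq A) :
  palindrome p -> palindrome q -> prefix p q -> suffix p q.
Proof. by move=> Pp Pq; rewrite -suffix_rev Pp Pq. Qed.

Lemma prefix_total_size (A : eqType) (u v : seq A) :
  prefix u v \/ prefix v u -> size u <= size v -> prefix u v.
Proof.
case=> // /prefixP [t ->]; rewrite size_cat -[X in _ <= X]addn0 leq_add2l leqn0.
by rewrite size_eq0 => /eqP ->; rewrite cats0 prefix_refl.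
Qed.

Lemma prefix_neq_rcons (A : eqType) (u s : seq A) :
  prefix u s -> u != s -> exists b, prefix (rcons u b) s.
Proof.
move=> /prefixP [[|b t] ->]; first by rewrite cats0 eqxx.
by exists b; rewrite -cat_rcons prefix_prefix.
Qed.

Section SuffixTree.
Variables (A : eqType) (T : finType) (r : T) (par : T -> T) (lab : T -> A).

Lemma is_suf_suffix y s :
  y != [::] -> suffix y s -> is_suf r par lab s -> is_suf r par lab y.
Proof.
move=> y0 /suffixP [x ->] [v [vr [Hv [Hr Hlab]]]].
have y_gt0 : 0 < size y by rewrite lt0n size_eq0.
exists (iter (size x) par v); split; [|split; [|split]].
- by apply: Hr; rewrite size_cat -{1}[size x]addn0 ltn_add2l.
- by rewrite -iterD addnC -size_cat.
- by move=> i Hi; rewrite -iterD; apply: Hr; rewrite size_cat addnC ltn_add2l.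
- move/eqP: Hlab; rewrite size_cat iotaD map_cat.
  rewrite eqseq_cat ?size_map ?size_iota // => /andP [_ /eqP ->].
  rewrite add0n -[size x]addn0 iotaDl addn0 -map_comp size_map size_iota.
  by apply: eq_map => i /=; rewrite addnC iterD.
Qed.

Lemma in_stree_prefix w w' :
  prefix w w' -> in_stree r par lab w' -> in_stree r par lab w.
Proof. by move=> ww' [s [Hs w's]]; exists s; split=> //; apply: prefix_trans w's. Qed.

Lemma in_stree_suffix y w :
  y != [::] -> suffix y w -> in_stree r par lab w -> in_stree r par lab y.
Proof.
move=> y0 /suffixP [x ->] [s [Hs /prefixP [t Hst]]].
exists (y ++ t); split; last exact: prefix_prefix.
apply: (is_suf_suffix _ _ Hs); first by case: y y0 {Hst}.
by rewrite Hst -catA suffix_suffix.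
Qed.

Lemma in_substr_stree w : (forall v, exists k, iter k par v = r) ->
  w != [::] -> in_substr r par lab w -> in_stree r par lab w.
Proof.
move=> Hroot w0 [u [v [_ [Hr ->]]]].
have : exists k, iter k par u == r by have [k Hk] := Hroot u; exists k; apply/eqP.
case/ex_minnP => k /eqP Hk Hmin.
have Hwk : size w <= k.
  by rewrite leqNgt; apply/negP => /Hr; rewrite Hk eqxx.
exists [seq lab (iter i par u) | i <- iota 0 k]; split.
- exists u; split; first by apply: (Hr 0); rewrite lt0n size_eq0.
  split; first by rewrite size_map size_iota.
  split; last by rewrite size_map size_iota.
  move=> i; rewrite size_map size_iota => Hi.
  by apply/negP => /Hmin; rewrite leqNgt Hi.
- by rewrite -(subnKC Hwk) iotaD map_cat prefix_prefix.
Qed.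

Lemma not_explicit_neq0 w :
  in_stree r par lab w -> ~ explicit r par lab w -> w != [::].
Proof. by move=> Iw nEw; apply/eqP => w0; apply: nEw; split=> //; constructor 1. Qed.

Lemma in_stree_rcons_uniq w a b : ~ explicit r par lab w ->
  in_stree r par lab (rcons w a) -> in_stree r par lab (rcons w b) -> a = b.
Proof.
move=> nEw Ia Ib; apply/eqP/negPn/negP => ab; apply: nEw; split.
  exact: in_stree_prefix (prefix_rcons _ _) Ia.
by constructor 3; exists a, b.
Qed.

Lemma in_stree_not_suf_rcons w : in_stree r par lab w -> ~ is_suf r par lab w ->
  exists a, in_stree r par lab (rcons w a).
Proof.
move=> [s [Hs ws]] nSw.
have [|a wa] := prefix_neq_rcons ws; first by apply: contra_not_neq nSw => ->.
by exists a, s.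
Qed.

Lemma implicit_next_suffix p q c : suffix p q -> in_stree r par lab q ->
  implicit_next r par lab p c -> implicit_next r par lab q c.
Proof.
move=> pq Iq [Ip nEp Ipc].
have p0 := not_explicit_neq0 Ip nEp.
have next_c a : in_stree r par lab (rcons q a) -> a = c.
  move=> Iqa; apply: (in_stree_rcons_uniq nEp _ Ipc); apply: in_stree_suffix Iqa.
    by rewrite -size_eq0 size_rcons.
  by rewrite suffix_rcons eqxx.
have nSq : ~ is_suf r par lab q.
  by move=> Sq; apply: nEp; split=> //; constructor 2; apply: is_suf_suffix Sq.
have nEq : ~ explicit r par lab q.
  case=> _ [q0 | // | [a [b [ab /next_c Ea /next_c Eb]]]]; last by rewrite Ea Eb eqxx in ab.
  by move: pq; rewrite q0 suffixs0 (negbTE p0).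
split=> //.
by have [a Iqa] := in_stree_not_suf_rcons Iq nSq; rewrite -(next_c a Iqa).
Qed.

Section EdgeChild.
Variables p sv : seq A.
Hypothesis p_sv : edge_child r par lab p sv.

Lemma edge_child_not_explicit : ~ explicit r par lab p.
Proof. by case: p_sv => _ psv nsv between; apply: between (prefix_refl p) psv nsv. Qed.

Lemma edge_child_neq0 : p != [::].
Proof.
case: p_sv => [[Isv _] psv _ _].
exact: not_explicit_neq0 (in_stree_prefix psv Isv) edge_child_not_explicit.
Qed.

Lemma edge_child_comparable z : in_stree r par lab (p ++ z) ->
  prefix (p ++ z) sv \/ prefix sv (p ++ z).
Proof.
case: p_sv => [[Isv _] psv _ between].
elim/last_ind: z => [|z a IHz]; first by rewrite cats0; left.
rewrite -rcons_cat => Iza.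
have [lt|ge] := IHz (in_stree_prefix (prefix_rcons _ _) Iza); last first.
  by right; apply: prefix_trans ge (prefix_rcons _ _).
have [<-|ne] := eqVneq (p ++ z) sv; first by right; apply: prefix_rcons.
have [b zb] := prefix_neq_rcons lt ne.
have nEz := between _ (prefix_prefix _ _) lt ne.
by left; rewrite (in_stree_rcons_uniq nEz Iza (in_stree_prefix zb Isv)).
Qed.

Lemma edge_child_prefix z : in_stree r par lab (p ++ z) ->
  size (p ++ z) <= size sv -> prefix (p ++ z) sv.
Proof. by move=> Iz; apply: prefix_total_size (edge_child_comparable Iz). Qed.

Lemma edge_child_shift x : prefix (x ++ p) sv -> x = [::].
Proof.
move=> /prefixP [w Esv]; apply/eqP/negPn/negP => x0.
have sv_pw : suffix (p ++ w) sv by rewrite Esv -catA suffix_suffix.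
have lt_pw : size (p ++ w) < size sv.
  by rewrite Esv -catA [size (x ++ _)]size_cat -[ltnLHS]add0n ltn_add2r lt0n size_eq0.
case: p_sv => [[Isv [sv0 | Ssv | [a [b [ab Ia Ib]]]]] _ _ between].
- by move: lt_pw; rewrite sv0.
- have pw0 : p ++ w != [::].
    by rewrite -size_eq0 size_cat addn_eq0 size_eq0 negb_and edge_child_neq0.
  have Spw := is_suf_suffix pw0 sv_pw Ssv.
  have Ipw : in_stree r par lab (p ++ w) by exists (p ++ w); rewrite prefix_refl.
  apply: (between _ (prefix_prefix _ _) (edge_child_prefix Ipw (ltnW lt_pw))).
    by apply: contraTneq lt_pw => ->; rewrite ltnn.
  by split=> //; constructor 2.
- have ext d : in_stree r par lab (rcons sv d) -> prefix (rcons (p ++ w) d) sv.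
    move=> Id; rewrite rcons_cat; apply: edge_child_prefix.
      apply: in_stree_suffix Id; first by rewrite -size_eq0 size_cat size_rcons addnS.
      by rewrite -rcons_cat suffix_rcons eqxx.
    by rewrite -rcons_cat size_rcons.
  move: (ext a Ia) (ext b Ib); rewrite !prefixE !size_rcons => /eqP ->.
  by rewrite eqseq_rcons (negbTE ab) andbF.
Qed.

End EdgeChild.
End SuffixTree.

Theorem lemma3 (A : eqType) (T : finType) (r : T) (par : T -> T)
  (lab : T -> A) (dol : A) :
  is_trie r par lab dol ->
  forall (p q : seq A),
    palindrome p -> palindrome q ->
    in_substr r par lab p -> in_substr r par lab q ->
    prefix p q -> p != q ->
    forall (c : A) (sv : seq A),
      implicit_next r par lab p c ->
      edge_child r par lab p sv ->
      (* the locus of q is implicit, lies in the subtree rooted at v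
         (i.e. str(v) is a prefix of q), and is followed by c *)
      implicit_next r par lab q c /\ prefix sv q.
Proof.
move=> [_ to_root _ _ _] p q Pp Pq _ Sq pq npq c sv Ip p_sv.
have p0 := edge_child_neq0 p_sv.
have q0 : q != [::] by apply: contraNneq p0 => q0; move: pq; rewrite q0 prefixs0.
have Iq := in_substr_stree to_root q0 Sq.
have suf_pq := palindrome_prefix_suffix Pp Pq pq.
split; first exact: implicit_next_suffix suf_pq Iq Ip.
have [q_sv|//] : prefix q sv \/ prefix sv q.
  by case/prefixP: pq Iq => z ->; apply: edge_child_comparable.
case/suffixP: suf_pq q_sv npq => x ->.
by move/(edge_child_shift p_sv) => ->; rewrite eqxx.
Qed.
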